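(* For $m,l,r\in\mathbb{N}$ with $l\le m$ and $1\le r\le m$, \begin{align*} x^{-l}\Delta^{(-m-1)}(-t^2)y^{-r}&=q^{2l}[m+1]_q\,t^2W^-(q^mt^2)\star x^{-l}\Delta^{(-m)}(-q^{-1}t^2)y^{1-r}\\ &\quad+q^{l-1}[l]_q[m+1]_q\,t^2G(q^mt^2)\star x^{1-l}\Delta^{(-m)}(-q^{-1}t^2)y^{1-r},\\ y^{-l}\widetilde\Delta^{(-m-1)}(-t^2)x^{-r}&=q^{2l}[m+1]_q\,t^2W^+(q^mt^2)\star y^{-l}\widetilde\Delta^{(-m)}(-q^{-1}t^2)x^{1-r}\\ &\quad+q^{l-1}[l]_q[m+1]_q\,t^2\widetilde G(q^mt^2)\star y^{1-l}\widetilde\Delta^{(-m)}(-q^{-1}t^2)x^{1-r}. \end{align*}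
   Context: $\mathbb{F}$ is a field of characteristic zero, $q\in\mathbb{F}$ nonzero and not a root of unity. $[n]_q=\frac{q^n-q^{-n}}{q-q^{-1}}$. $\mathbb{V}$ is the free algebra on letters $x,y$ with basis the words ($\mathbf 1$ the empty word). The $q$-shuffle product $\star$ on $\mathbb{V}$ is the bilinear product with $\mathbf 1\star v=v\star\mathbf 1=v$ and, for nonempty words $u=u_1\cdots u_r$, $v=v_1\cdots v_s$, $u\star v=u_1((u_2\cdots u_r)\star v)+v_1(u\star(v_2\cdots v_s))q^{\langle v_1,u_1\rangle+\dots+\langle v_1,u_r\rangle}$ (juxtaposition = concatenation), where $\langle x,x\rangle=\langle y,y\rangle=2$, $\langle x,y\rangle=\langle y,x\rangle=-2$. It is extended to formal power series in the indeterminate $t$ coefficientwise (Cauchy product). Generating functions: $W^-(t)=\sum_{n\ge0}x(yx)^nt^n$, $W^+(t)=\sum_{n\ge0}y(xy)^nt^n$, $\widetilde G(t)=\sum_{n\ge0}(xy)^nt^n$, $G(t)=\sum_{n\ge0}(yx)^nt^n$ (with $(xy)^0=(yx)^0=\mathbf 1$); $W^-(q^mt^2)$ denotes substitution of $q^mt^2$ for $t$, etc. $\bar x=1,\bar y=-1$; a word $a_1\cdots a_n$ is Catalan if $\bar a_1+\dots+\bar a_i\ge0$ ($i<n$) and $\bar a_1+\dots+\bar a_n=0$; $\mathrm{Cat}_n$ = Catalan words of length $2n$. $\Delta^{(k)}_n=\sum_{a_1\cdots a_{2n}\in\mathrm{Cat}_n}\prod_{i=1}^{2n}[\bar a_1+\dots+\bar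 a_{i-1}+k(\bar a_i+1)/2]_q\,a_1\cdots a_{2n}$, $\Delta^{(k)}(t)=\sum_n\Delta^{(k)}_nt^n$; $\widetilde\Delta^{(k)}_n$ is obtained from $\Delta^{(k)}_n$ by interchanging $x,y$ in every word, $\widetilde\Delta^{(k)}(t)=\sum_n\widetilde\Delta^{(k)}_nt^n$. Deletion: $x^{-1}w$ deletes a leading $x$ of a word $w$ (result $0$ if $w$ does not start with $x$, including $w=\mathbf 1$); $y^{-1}w$, $wx^{-1}$, $wy^{-1}$ analogously (leading $y$, trailing $x$, trailing $y$); extended linearly and coefficientwise; exponent $-k<0$ means $k$-fold application, exponent $0$ the identity, and a positive exponent $x^{k}w$ (resp. $y^kw$) means concatenation with $x^k$ (resp. $y^k$) on the left (this only occurs for $l=0$, where that summand has the factor $[0]_q=0$). *)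

From HB Require Import structures.
From mathcomp Require Import all_boot all_order all_algebra.
Set Implicit Arguments. Unset Strict Implicit. Unset Printing Implicit Defensive.
Import Order.TTheory GRing.Theory Num.Theory.
Local Open Scope ring_scope.

Inductive letter := lx | ly.
Definition letter_eqb (a b : letter) :=
  match a, b with lx, lx | ly, ly => true | _, _ => false end.
Lemma letter_eqP : Equality.axiom letter_eqb.
Proof. by case; case; constructor. Qed.
HB.instance Definition _ := hasDecEq.Build letter letter_eqP.

Definition word := seq letter.
Definition swap_letter (a : letter) := if a is lx then ly else lx.

Definition pairing (a b : letter) : int := if a == b then 2 else -2.
Definition bar (a : letter) : int := if a is lx then 1 else -1.
Definition psum (w : word) : int := \sum_(a <- w) bar a.

Definition catalan (w : word) : bool :=
  all (fun i => 0 <= psum (take i w)) (iota 1 (size w).-1) && (psum w == 0).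

Fixpoint allwords (n : nat) : seq word :=
  if n is n'.+1 then flatten [seq [:: lx :: w; ly :: w] | w <- allwords n']
  else [:: [::]].

Section Defs.
Variable F : fieldType.

(* Elements of V: finite formal linear combinations of words,
   compared through their coefficient function [coef]. *)
Definition vec := seq (F * word).
Definition coef (v : vec) (w : word) : F := \sum_(p <- v | p.2 == w) p.1.
Definition vscale (c : F) (v : vec) : vec := [seq (c * p.1, p.2) | p <- v].
Definition lcons (a : letter) (v : vec) : vec := [seq (p.1, a :: p.2) | p <- v].

Variable q : F.

Definition qint (n : int) : F := (q ^ n - q ^ (- n)) / (q - q^-1).

Fixpoint wshuffle (u : word) : word -> vec :=
  match u with
  | [::] => fun v => [:: (1, v)]
  | u1 :: u' => fix shv (v : word) : vec :=
      match v with
      | [::] => [:: (1, u)]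
      | v1 :: v' =>
          lcons u1 (wshuffle u' v) ++
          vscale (q ^ (\sum_(a <- u) pairing v1 a)) (lcons v1 (shv v'))
      end
  end.

Definition vshuffle (u v : vec) : vec :=
  flatten [seq vscale (a.1 * b.1) (wshuffle a.2 b.2) | a <- u, b <- v].

(* Deletion / concatenation operators  a^e w, w a^e  with e : int *)
Definition ldel1 (a : letter) (v : vec) : vec :=
  [seq (p.1, behead p.2) | p <- v & ohead p.2 == Some a].
Definition rdel1 (a : letter) (v : vec) : vec :=
  [seq (p.1, rev (behead (rev p.2))) | p <- v & ohead (rev p.2) == Some a].
Definition lexp (a : letter) (e : int) (v : vec) : vec :=
  match e with
  | Posz n => [seq (p.1, nseq n a ++ p.2) | p <- v]
  | Negz n => iter n.+1 (ldel1 a) v   (* e = -(n+1) *)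
  end.
Definition rexp (a : letter) (e : int) (v : vec) : vec :=
  match e with
  | Posz n => [seq (p.1, p.2 ++ nseq n a) | p <- v]
  | Negz n => iter n.+1 (rdel1 a) v
  end.

(* coefficient prod_i [abar_1+...+abar_{i-1} + k(abar_i+1)/2]_q *)
Fixpoint dco (k s : int) (w : word) : F :=
  match w with
  | [::] => 1
  | a :: w' => qint (s + (if a is lx then k else 0)) * dco k (s + bar a) w'
  end.

Definition Delta (k : int) (n : nat) : vec :=
  [seq (dco k 0 w, w) | w <- allwords (2 * n) & catalan w].
Definition Deltat (k : int) (n : nat) : vec :=
  [seq (p.1, map swap_letter p.2) | p <- Delta k n].

(* formal power series in t with coefficients in V *)
Definition series := nat -> vec.

Definition Wm : series := fun n => [:: (1, lx :: flatten (nseq n [:: ly; lx]))].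
Definition Wp : series := fun n => [:: (1, ly :: flatten (nseq n [:: lx; ly]))].
Definition Gt : series := fun n => [:: (1, flatten (nseq n [:: lx; ly]))].
Definition G  : series := fun n => [:: (1, flatten (nseq n [:: ly; lx]))].
Definition DeltaS (k : int) : series := Delta k.
Definition DeltatS (k : int) : series := Deltat k.

Definition sadd (A B : series) : series := fun n => A n ++ B n.
Definition sscale (c : F) (A : series) : series := fun n => vscale c (A n).
Definition smap (f : vec -> vec) (A : series) : series := fun n => f (A n).
Definition sshuffle (A B : series) : series :=
  fun n => flatten [seq vshuffle (A i) (B (n - i)%N) | i <- iota 0 n.+1].
(* A(c t^2) *)
Definition subst2 (c : F) (A : series) : series :=
  fun n => if odd n then [::] else vscale (c ^+ n./2) (A n./2).
(* t^2 A(t) *)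
Definition mult_t2 (A : series) : series :=
  fun n => if (n < 2)%N then [::] else A (n - 2)%N.

Definition series_eq (A B : series) : Prop :=
  forall n w, coef (A n) w = coef (B n) w.

End Defs.

From HB Require Import structures.
From mathcomp Require Import all_boot all_order all_algebra.
From mathcomp Require Import ring zify.
Import Order.TTheory GRing.Theory Num.Theory.
Local Open Scope ring_scope.

(** The identities are compared coefficientwise in [t] and in the words.
   Deleting [x^l] on the left and [y^r] on the right of a Catalan word of
   [Delta^(k)] leaves a lattice path from height [l] to height [r], and the
   coefficient factors into the weights of the prefix, of the suffix and of
   this middle path ([coef_Delta_nseq_cat]).  Since the q-shuffle is defined
   by a first-letter recursion, the coefficient of [w] in [u * V] can be
   computed letter by letter along [w] ([shuffle_coef]).  The core of the
   proof is the expansion [dco_path_expansion] of [[b]_q] times a middle-path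
   weight for [Delta^(-m-1)] as a combination of shuffles of the words
   [x(yx)^i] and [(yx)^i] with middle-path weights for [Delta^(-m)]; it is
   proved by induction on [w], every letter reducing to a q-number identity.
   The second identity is the image of the first under the swap [x <-> y],
   which preserves the pairing and hence the q-shuffle. *)

Section Coefficients.
Context {F : fieldType}.
Implicit Types (u v : vec F) (w : word).

Lemma coef_nil w : coef ([::] : vec F) w = 0.
Proof. by rewrite /coef big_nil. Qed.

Lemma coef_cat u v w : coef (u ++ v) w = coef u w + coef v w.
Proof. by rewrite /coef big_cat. Qed.

Lemma coef_flatten (vs : seq (vec F)) w : coef (flatten vs) w = \sum_(v <- vs) coef v w.
Proof.
elim: vs => [|v vs IH]; first by rewrite coef_nil big_nil.
by rewrite /= coef_cat IH big_cons.
Qed.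

Lemma coef_single (c : F) (u w : word) : coef [:: (c, u)] w = if u == w then c else 0.
Proof. by rewrite /coef big_cons big_nil addr0. Qed.

Lemma coef_vscale c v w : coef (vscale c v) w = c * coef v w.
Proof. by rewrite /coef big_map mulr_sumr. Qed.

Lemma coef_lcons_nil a v : coef (lcons a v) [::] = 0.
Proof. by rewrite /coef big_map big_pred0. Qed.

Lemma coef_lcons a v c w : coef (lcons a v) (c :: w) = if a == c then coef v w else 0.
Proof.
rewrite /coef big_map; case: eqP => [->|ne].
  by apply: eq_bigl => p /=; rewrite eqseq_cons eqxx.
by rewrite big_pred0 // => p /=; rewrite eqseq_cons; case: eqP.
Qed.

Lemma coef_ldel1 a v w : coef (ldel1 a v) w = coef v (a :: w).
Proof.
rewrite /coef big_map big_filter_cond.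
by apply: eq_bigl => -[c [|b s]].
Qed.

Lemma coef_rdel1 a v w : coef (rdel1 a v) w = coef v (rcons w a).
Proof.
rewrite /coef big_map big_filter_cond; apply: eq_bigl => -[c s] /=.
case/lastP: s => [|s b] /=; first by case: w.
by rewrite rev_rcons /= revK eqseq_rcons andbC.
Qed.

Lemma coef_iter_ldel1 a n v w : coef (iter n (ldel1 a) v) w = coef v (nseq n a ++ w).
Proof. by elim: n v => [|n IH] v //; rewrite iterSr IH coef_ldel1. Qed.

Lemma coef_iter_rdel1 a n v w : coef (iter n (rdel1 a) v) w = coef v (w ++ nseq n a).
Proof. by elim: n w => [|n IH] w; rewrite ?cats0 // iterS coef_rdel1 IH cat_rcons. Qed.

Lemma coef_lexpN a (l : nat) v w : coef (lexp a (- l%:Z) v) w = coef v (nseq l a ++ w).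
Proof.
case: l => [|l]; last exact: coef_iter_ldel1 l.+1 v w.
by rewrite /coef big_map; apply: eq_bigl => -[].
Qed.

Lemma coef_rexpN a (r : nat) v w : coef (rexp a (- r%:Z) v) w = coef v (w ++ nseq r a).
Proof.
case: r => [|r]; last exact: coef_iter_rdel1 r.+1 v w.
by rewrite /coef big_map cats0; apply: eq_bigl => -[c s] /=; rewrite cats0.
Qed.
End Coefficients.

Definition pairings (c : letter) (u : word) : int := \sum_(a <- u) pairing c a.

Section ShuffleCoefficient.
Context {F : fieldType} (q : F).
Implicit Types (V : vec F) (f g : word -> F).

(* The coefficient of [w] in the q-shuffle of [u] with a vector whose
   coefficient function is [f] (see [coef_vshuffle_single]). *)
Fixpoint shuffle_coef (u : word) f (w : word) : F :=
  match w with
  | [::] => if u is [::] then f [::] else 0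
  | c :: w' => (if u is a :: u' then (if a == c then shuffle_coef u' f w' else 0) else 0)
               + q ^ pairings c u * shuffle_coef u (fun v => f (c :: v)) w'
  end.

Lemma eq_shuffle_coef u f g w : f =1 g -> shuffle_coef u f w = shuffle_coef u g w.
Proof.
elim: w u f g => [|c w IH] u f g fg /=; first by case: u.
congr (_ + _ * _); last exact: IH.
by case: u => // a u; case: eqP => // _; apply: IH.
Qed.

Lemma shuffle_coefZ u k f w : shuffle_coef u (fun v => k * f v) w = k * shuffle_coef u f w.
Proof.
elim: w u f => [|c w IH] u f /=; first by case: u; rewrite ?mulr0.
rewrite mulrDr IH mulrCA; congr (_ + _).
by case: u => [|a u]; rewrite ?mulr0 //; case: eqP; rewrite ?mulr0.
Qed.

Lemma shuffle_coef0 u f w : f =1 (fun=> 0) -> shuffle_coef u f w = 0.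
Proof.
move=> f0; rewrite -[RHS](mul0r (shuffle_coef u f w)) -shuffle_coefZ.
by apply: eq_shuffle_coef => v; rewrite f0 mul0r.
Qed.

Lemma coef_wshuffle_nil u v :
  coef (wshuffle q u v) [::] = ((u == [::]) && (v == [::]))%:R.
Proof.
case: u => [|a u] /=; first by rewrite coef_single; case: v.
case: v => [|b v] /=; first by rewrite coef_single.
by rewrite coef_cat coef_vscale !coef_lcons_nil mulr0 addr0.
Qed.

Lemma coef_wshuffle_cons u v c w :
  coef (wshuffle q u v) (c :: w) =
  (if u is a :: u' then (if a == c then coef (wshuffle q u' v) w else 0) else 0)
  + (if v is b :: v' then
       (if b == c then q ^ pairings b u * coef (wshuffle q u v') w else 0) else 0).
Proof.
case: u => [|a u] /=.
  rewrite coef_single add0r; case: v => [|b v] //=.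
  rewrite coef_single eqseq_cons /pairings big_nil expr0z mul1r.
  by case: eqP => //; rewrite andbF.
case: v => [|b v] /=.
  rewrite coef_single eqseq_cons addr0; case: eqP => // _.
  by case: u => [|a' u] /=; rewrite coef_single.
rewrite coef_cat coef_vscale !coef_lcons; congr (_ + _).
by case: eqP; rewrite ?mulr0.
Qed.

Lemma sum_coef_wshuffle u V w :
  \sum_(b <- V) b.1 * coef (wshuffle q u b.2) w = shuffle_coef u (coef V) w.
Proof.
elim: w u V => [|c w IH] u V /=.
  under eq_bigr => b _ do rewrite coef_wshuffle_nil.
  case: u => [|a u] /=; last by rewrite big1 // => b _; rewrite mulr0.
  rewrite /coef [RHS]big_mkcond; apply: eq_bigr => b _.
  by case: eqP; rewrite ?mulr1 ?mulr0.
under eq_bigr => b _ do rewrite coef_wshuffle_cons mulrDr.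
rewrite big_split /=; congr (_ + _).
  case: u => [|a u]; first by rewrite big1 // => b _; rewrite mulr0.
  by case: eqP => _; rewrite ?IH // big1 // => b _; rewrite mulr0.
rewrite -(@eq_shuffle_coef u (coef (ldel1 c V))); last by move=> v; rewrite coef_ldel1.
rewrite -IH mulr_sumr /ldel1 big_map big_filter [RHS]big_mkcond /=.
apply: eq_bigr => -[k [|b s]] _ //=; rewrite ?mulr0 //.
case: eqP => [->|ne]; last by rewrite mulr0; case: eqP => // -[].
by rewrite eqxx mulrCA.
Qed.

Lemma coef_vshuffle_single (c : F) u V w :
  coef (vshuffle q [:: (c, u)] V) w = c * shuffle_coef u (coef V) w.
Proof.
rewrite /vshuffle /= cats0 coef_flatten big_map -sum_coef_wshuffle mulr_sumr.
by apply: eq_bigr => b _; rewrite coef_vscale mulrA.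
Qed.
End ShuffleCoefficient.

Lemma psum_nil : psum [::] = 0.
Proof. by rewrite /psum big_nil. Qed.

Lemma psum_cons a w : psum (a :: w) = bar a + psum w.
Proof. by rewrite /psum big_cons. Qed.

Lemma psum_cat u v : psum (u ++ v) = psum u + psum v.
Proof. by rewrite /psum big_cat. Qed.

Lemma psum_nseq_lx n : psum (nseq n lx) = n%:Z.
Proof. by elim: n => [|n IH]; rewrite ?psum_nil //= psum_cons IH intS. Qed.

Lemma psum_nseq_ly n : psum (nseq n ly) = - n%:Z.
Proof. by elim: n => [|n IH]; rewrite ?psum_nil //= psum_cons IH intS opprD. Qed.

Lemma psum_count w : psum w = (count_mem lx w)%:Z - (count_mem ly w)%:Z.
Proof.
elim: w => [|a w IH]; first by rewrite psum_nil.
by rewrite psum_cons IH; case: a => /=; lia.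
Qed.

Lemma size_count w : size w = (count_mem lx w + count_mem ly w)%N.
Proof. by elim: w => [|[] w IH] //=; rewrite IH ?add0n ?add1n ?addnS. Qed.

Lemma count_allwords n w : count_mem w (allwords n) = (size w == n).
Proof.
elim: n w => [|n IH] [|c w] //=; rewrite count_flatten -map_comp.
  by elim: (allwords n).
rewrite eqSS -IH; elim: (allwords n) => [|v s IHs] //=.
rewrite IHs; congr (_ + _)%N.
by case: c {IHs}; rewrite !eqseq_cons /=; case: (v == w).
Qed.

Section DeltaCoefficients.
Context {F : fieldType} (q : F).

Lemma qint0 : qint q 0 = 0.
Proof. by rewrite /qint oppr0 subrr mul0r. Qed.

Lemma qintN z : qint q (- z) = - qint q z.
Proof. by rewrite /qint opprK -mulNr opprB. Qed.

Lemma dco_cat k s u v : dco q k s (u ++ v) = dco q k s u * dco q k (s + psum u) v.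
Proof.
elim: u s => [|a u IH] s /=; first by rewrite mul1r psum_nil addr0.
by rewrite IH psum_cons addrA mulrA.
Qed.

(* The factor [0]_q = 0 kills every word whose path drops below height 0. *)
Lemma dco_prefix_ge0 k (s : int) w :
  0 <= s -> dco q k s w != 0 -> forall i, 0 <= s + psum (take i w).
Proof.
elim: w s => [|a w IH] s s_ge0 /=; first by move=> _ i; rewrite psum_nil addr0.
rewrite mulf_eq0 negb_or => /andP[qint_neq0 dco_neq0] [|i] /=; first by rewrite psum_nil addr0.
rewrite psum_cons addrA; apply: IH dco_neq0 i.
move: qint_neq0; case: a => /=; first by lia.
by rewrite addr0; case: (s =P 0) => [->|]; [rewrite qint0 eqxx | lia].
Qed.

Lemma coef_Delta k n w :
  coef (Delta q k n) w = if (size w == 2 * n)%N && (psum w == 0) then dco q k 0 w else 0.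
Proof.
rewrite /coef big_map big_filter_cond /= big_mkcondl.
rewrite (eq_bigr (fun=> if catalan w then dco q k 0 w else 0)); last by move=> v /eqP ->.
rewrite big_const_seq count_allwords /catalan.
case: (size w == 2 * n)%N; case: (psum w == 0); rewrite /= ?andbF ?addr0 //.
case: allP => // not_catalan; case: (dco q k 0 w =P 0) => // /eqP dco_neq0.
exfalso; apply: not_catalan => i _; rewrite -[psum _]add0r.
exact: dco_prefix_ge0 dco_neq0 i.
Qed.

(* The weight of [v] as the middle part of a Catalan word: a path from height
   [a] to height [b] with [N] up-steps. *)
Definition dco_path (k a b : int) (N : nat) (v : word) : F :=
  if (count_mem lx v == N) && (a + psum v == b) then dco q k a v else 0.

Lemma dco_path_nil k a b N : dco_path k a b N [::] = ((N == 0)%N && (a == b))%:R.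
Proof. by rewrite /dco_path psum_nil addr0 eq_sym; case: (_ && _). Qed.

Lemma dco_path_x k a b N v :
  dco_path k a b N (lx :: v) = if N is N'.+1 then qint q (a + k) * dco_path k (a + 1) b N' v else 0.
Proof.
rewrite /dco_path psum_cons /= add1n addrA.
by case: N => [|N] //=; rewrite eqSS; case: ifP; rewrite ?mulr0.
Qed.

Lemma dco_path_y k a b N v : dco_path k a b N (ly :: v) = qint q a * dco_path k (a - 1) b N v.
Proof.
rewrite /dco_path psum_cons /= add0n addrA addr0.
by case: ifP; rewrite ?mulr0.
Qed.

Lemma coef_Delta_nseq_cat k j l r v :
  coef (Delta q k j) (nseq l lx ++ v ++ nseq r ly) =
  if (l <= j)%N then dco q k 0 (nseq l lx) * dco q k r%:Z (nseq r ly) * dco_path k l r (j - l) v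
  else 0.
Proof.
rewrite coef_Delta /dco_path !size_cat !size_nseq size_count.
rewrite !psum_cat psum_nseq_lx psum_nseq_ly psum_count.
case: leqP => le_lj.
  have -> : forall cx cy : nat,
      ((l + (cx + cy + r) == 2 * j)%N && (l%:Z + (cx%:Z - cy%:Z - r%:Z) == 0))
      = ((cx == j - l)%N && (l%:Z + (cx%:Z - cy%:Z) == r%:Z)).
    by move=> cx cy; apply/idP/idP => /andP[/eqP h1 /eqP h2]; apply/andP; split; apply/eqP; lia.
  case: ifP => [/andP[_ /eqP path_end]|_]; last by rewrite mulr0.
  by rewrite !dco_cat add0r psum_nseq_lx psum_count path_end mulrA mulrAC.
by case: ifP => // /andP[/eqP h1 /eqP h2]; lia.
Qed.

Lemma dco_nseq_ly_indep k k' s n : dco q k s (nseq n ly) = dco q k' s (nseq n ly).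
Proof. by elim: n s => [|n IH] s //=; rewrite IH. Qed.

Lemma dco_nseq_lyS k (r : nat) :
  dco q k r.+1%:Z (nseq r.+1 ly) = qint q r.+1%:Z * dco q k r%:Z (nseq r ly).
Proof. by rewrite /= addr0 intS addrAC subrr add0r. Qed.

Lemma dco_nseq_lxS k n : dco q k 0 (nseq n.+1 lx) = qint q k * dco q (k + 1) 0 (nseq n lx).
Proof.
rewrite /= add0r; congr (_ * _); elim: n 0 => [|n IH] s //=.
by rewrite IH addrAC addrA.
Qed.

Lemma dco_nseq_lxSr k n : dco q k 0 (nseq n.+1 lx) = dco q k 0 (nseq n lx) * qint q (n%:Z + k).
Proof.
by rewrite -addn1 nseqD dco_cat add0r psum_nseq_lx /= mulr1.
Qed.
End DeltaCoefficients.

Definition wm_word (i : nat) : word := lx :: flatten (nseq i [:: ly; lx]).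
Definition g_word (i : nat) : word := flatten (nseq i [:: ly; lx]).

Lemma pairings_g_word c i : pairings c (g_word i) = 0.
Proof.
elim: i => [|i IH]; first by rewrite /pairings big_nil.
by rewrite /g_word /= /pairings !big_cons -/(pairings c _) IH addr0; case: c {IH}.
Qed.

Lemma pairings_wm_word c i : pairings c (wm_word i) = pairing c lx.
Proof. by rewrite /pairings big_cons -/(pairings c _) pairings_g_word addr0. Qed.

Section ShuffleWords.
Context {F : fieldType} (q : F).
Implicit Types (f : word -> F) (w : word).

Lemma shuffle_coef_g_word_nil i f :
  shuffle_coef q (g_word i) f [::] = if i == 0%N then f [::] else 0.
Proof. by case: i. Qed.

Lemma shuffle_coef_wm_word_x i f w :
  shuffle_coef q (wm_word i) f (lx :: w) =
  shuffle_coef q (g_word i) f w + q ^ 2 * shuffle_coef q (wm_word i) (fun v => f (lx :: v)) w.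
Proof. by rewrite /= pairings_wm_word. Qed.

Lemma shuffle_coef_wm_word_y i f w :
  shuffle_coef q (wm_word i) f (ly :: w) =
  q ^ (-2) * shuffle_coef q (wm_word i) (fun v => f (ly :: v)) w.
Proof. by rewrite /= pairings_wm_word add0r. Qed.

Lemma shuffle_coef_g_word_x i f w :
  shuffle_coef q (g_word i) f (lx :: w) = shuffle_coef q (g_word i) (fun v => f (lx :: v)) w.
Proof.
rewrite [LHS]/= pairings_g_word expr0z mul1r.
by case: i => [|i] /=; rewrite add0r.
Qed.

Lemma shuffle_coef_g_word_y i f w :
  shuffle_coef q (g_word i) f (ly :: w) =
  (if i is i'.+1 then shuffle_coef q (wm_word i') f w else 0)
  + shuffle_coef q (g_word i) (fun v => f (ly :: v)) w.
Proof. by rewrite [LHS]/= pairings_g_word expr0z mul1r; case: i. Qed.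

Lemma shuffle_coef_dco_path_x u k a b N w :
  shuffle_coef q u (fun v => dco_path q k a b N (lx :: v)) w =
  if N is N'.+1 then qint q (a + k) * shuffle_coef q u (dco_path q k (a + 1) b N') w else 0.
Proof.
case: N => [|N]; first by apply: shuffle_coef0 => v; rewrite dco_path_x.
by rewrite -shuffle_coefZ; apply: eq_shuffle_coef => v; rewrite dco_path_x.
Qed.

Lemma shuffle_coef_dco_path_y u k a b N w :
  shuffle_coef q u (fun v => dco_path q k a b N (ly :: v)) w =
  qint q a * shuffle_coef q u (dco_path q k (a - 1) b N) w.
Proof. by rewrite -shuffle_coefZ; apply: eq_shuffle_coef => v; rewrite dco_path_y. Qed.
End ShuffleWords.

Section Expansion.
Context {F : fieldType} (q : F).
Hypotheses (q_neq0 : q != 0) (q2_neq1 : q ^+ 2 != 1).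
Variable m : int.

(* The coefficients of [dco_path_expansion]; [alpha_sign] and [beta_sign]
   relate them to the coefficients [(q^m)^i (-q^-1)^j] of the theorem. *)
Definition alpha (a : int) (N i : nat) : F :=
  (-1) ^+ i.+1 * q ^ ((m + 1) * i%:Z - N%:Z + a + 1) * qint q (m - a + 1).
Definition beta (a : int) (N i : nat) : F :=
  (-1) ^+ i * q ^ ((m + 1) * i%:Z - N%:Z) * qint q a.

Let qq_neq1 : q * q - 1 != 0. Proof. by rewrite subr_eq0 -expr2. Qed.

Ltac qfield := rewrite /alpha /beta /qint;
  rewrite ?intS ?(mulrDl, mulrDr, opprD, opprK, mulNr, mulrN, mul1r, mulr1);
  rewrite ?expfzDr //; rewrite -?invr_expz ?expr1z ?exprS -?exprnP;
  field; rewrite ?q_neq0 ?qq_neq1 ?expfz_neq0 ?expf_neq0 //.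

Lemma alpha_x a N i :
  alpha a N.+1 i * q ^ 2 * qint q (a + - m) = qint q (a + (- m - 1)) * alpha (a + 1) N i.
Proof. qfield. Qed.

Lemma alpha_beta_x a N i :
  alpha a N.+1 i + beta a N.+1 i * qint q (a - 1 + - m) =
  qint q (a + (- m - 1)) * beta (a + 1) N i.
Proof. qfield. Qed.

Lemma alpha_beta_y a N i :
  alpha a N i * q ^ (-2) * qint q a + beta a N i.+1 = qint q a * alpha (a - 1) N i.
Proof. qfield. Qed.

Lemma beta_y a N i : beta a N i * qint q (a - 1) = qint q a * beta (a - 1) N i.
Proof. qfield. Qed.

Lemma beta00 a : beta a 0 0 = qint q a.
Proof. by rewrite /beta mulr0 subrr expr0z !mul1r. Qed.

Variable b : int.

Definition expansion_at (w : word) : Prop := forall (a : int) (N : nat),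
  qint q b * dco_path q (- m - 1) a b N w =
  \sum_(0 <= i < N) alpha a N i *
     shuffle_coef q (wm_word i) (dco_path q (- m) a (b - 1) (N - i.+1)) w +
  \sum_(0 <= i < N.+1) beta a N i *
     shuffle_coef q (g_word i) (dco_path q (- m) (a - 1) (b - 1) (N - i)) w.

Lemma expansion_nil : expansion_at [::].
Proof.
move=> a N; rewrite big1 ?add0r; last by move=> i _; rewrite mulr0.
rewrite big_nat_recl // shuffle_coef_g_word_nil /= subn0 big1 ?addr0; last first.
  by move=> i _; rewrite mulr0.
rewrite !dco_path_nil (inj_eq (addIr _)).
case: (N =P 0)%N => [->|_] /=; last by rewrite !mulr0.
by case: (a =P b) => [->|_]; rewrite ?mulr0 // beta00 mulr1.
Qed.

Lemma expansion_x w : expansion_at w -> expansion_at (lx :: w).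
Proof.
move=> IH a [|N].
  rewrite dco_path_x mulr0 big_geq // add0r big_nat1 shuffle_coef_g_word_x.
  by rewrite shuffle_coef_dco_path_x mulr0.
under eq_bigr => i _ do rewrite shuffle_coef_wm_word_x shuffle_coef_dco_path_x subSS mulrDr.
under [X in _ = _ + X]eq_bigr => i _ do rewrite shuffle_coef_g_word_x shuffle_coef_dco_path_x.
rewrite dco_path_x mulrCA IH big_split /=.
rewrite [X in _ = _ + X + _]big_nat_recr //= subnn mulr0 mulr0 addr0.
rewrite [X in _ = _ + _ + X]big_nat_recr //= subnn mulr0 addr0.
under [X in _ = _ + X + _]eq_big_nat => i /andP[_ lt_iN] do rewrite -(subnSK lt_iN) /=.
under [X in _ = _ + _ + X]eq_big_nat => i /andP[_ le_iN] do rewrite subSn // subrK /=.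
(* The [q^2]-parts of the W-terms match the W-terms of the hypothesis, the
   other parts of the W-terms together with the G-terms match its G-terms. *)
rewrite addrK -addrA addrCA mulrDr; congr (_ + _).
  rewrite mulr_sumr; apply: eq_bigr => i _.
  by rewrite [LHS]mulrA -alpha_x; ring.
rewrite -big_split mulr_sumr; apply: eq_bigr => i _ /=.
by rewrite [LHS]mulrA -alpha_beta_x; ring.
Qed.

Lemma expansion_y w : expansion_at w -> expansion_at (ly :: w).
Proof.
move=> IH a N.
under eq_bigr => i _ do rewrite shuffle_coef_wm_word_y shuffle_coef_dco_path_y.
under [X in _ = _ + X]eq_bigr => i _ do
  rewrite shuffle_coef_g_word_y shuffle_coef_dco_path_y mulrDr.
rewrite dco_path_y mulrCA IH big_split /= [X in _ = _ + (X + _)]big_nat_recl //= mulr0 add0r.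
rewrite addrA -big_split /= mulrDr !mulr_sumr; congr (_ + _); apply: eq_bigr => i _.
  by rewrite [LHS]mulrA -alpha_beta_y; ring.
by rewrite [LHS]mulrA -beta_y; ring.
Qed.

Lemma dco_path_expansion w : expansion_at w.
Proof.
by elim: w => [|[] w IH]; [apply: expansion_nil | apply: expansion_x | apply: expansion_y].
Qed.
End Expansion.

Section SeriesCoefficients.
Context {F : fieldType} (q : F).
Implicit Types (A D : series F) (w : word).

(* The [i]-th summand of the degree-[n] coefficient of the product of
   [t^2 A(c t^2)] and [B(d t^2)], where [phi a b] stands for the product of
   the coefficients [A_a] and [B_b]. *)
Definition t2_term (phi : nat -> nat -> F) (n i : nat) : F :=
  if (i < 2)%N then 0 else if odd (i - 2) then 0 else if odd (n - i) then 0
  else phi (i - 2)./2 (n - i)./2.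

Lemma sum_t2_term_odd phi n : odd n -> \sum_(0 <= i < n.+1) t2_term phi n i = 0.
Proof.
move=> odd_n; rewrite big_nat big1 // => i /andP[_ lt_in].
rewrite /t2_term; case: ltnP => // le2i.
by rewrite !oddB // odd_n addbF; case: (odd i).
Qed.

Lemma sum_t2_term_double phi k :
  \sum_(0 <= i < k.*2.+1) t2_term phi k.*2 i = \sum_(0 <= j < k) phi j (k - 1 - j)%N.
Proof.
elim: k phi => [|k IH] phi; first by rewrite big_nat1 big_geq.
rewrite doubleS big_nat_recr // big_nat_recr // [RHS]big_nat_recr //= -addrA.
have -> : t2_term phi k.*2.+2 k.*2.+1 = 0 by rewrite /t2_term subSnn /= !if_same.
have -> : t2_term phi k.*2.+2 k.*2.+2 = phi k 0.
  by rewrite /t2_term subnn /= !subSS subn0 odd_double doubleK.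
rewrite add0r.
rewrite (@eq_big_nat _ _ _ 0 k.*2.+1 _ (t2_term (fun a b => phi a b.+1) k.*2)); last first.
  move=> i /andP[_]; rewrite ltnS => hi.
  by rewrite /t2_term (subSn (leqW hi)) (subSn hi) /= negbK.
rewrite IH subSS subn0 subnn; congr (_ + _); apply: eq_big_nat => j /andP[_ hj].
by congr (phi j _); lia.
Qed.

Lemma sum_t2_term phi n :
  \sum_(0 <= i < n.+1) t2_term phi n i =
  if odd n then 0 else \sum_(0 <= j < n./2) phi j (n./2 - 1 - j)%N.
Proof.
case: ifP => [|even_n]; first exact: sum_t2_term_odd.
have [k ->] : exists k, n = k.*2 by exists n./2; rewrite -{1}(odd_double_half n) even_n.
by rewrite doubleK sum_t2_term_double.
Qed.

Lemma coef_sshuffle_t2 (c d : F) A (U : nat -> word) (T : vec F -> vec F) (g : word -> word) D n w :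
  (forall k, A k = [:: (1, U k)]) -> (forall V v, coef (T V) v = coef V (g v)) ->
  coef (sshuffle q (mult_t2 (subst2 c A)) (smap T (subst2 d D)) n) w =
  if odd n then 0 else
    \sum_(0 <= j < n./2) c ^+ j * d ^+ (n./2 - 1 - j)%N *
      shuffle_coef q (U j) (fun v => coef (D (n./2 - 1 - j)%N) (g v)) w.
Proof.
move=> A_single T_coef.
rewrite /sshuffle coef_flatten big_map -[iota 0 n.+1]/(index_iota 0 n.+1).
rewrite -(sum_t2_term (fun a b =>
  c ^+ a * d ^+ b * shuffle_coef q (U a) (fun v => coef (D b) (g v)) w)).
apply: eq_bigr => i _; rewrite /t2_term /mult_t2.
case: ifP => _; first by rewrite /vshuffle coef_nil.
rewrite /subst2; case: ifP => _; first by rewrite /vshuffle coef_nil.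
rewrite A_single /vscale /= coef_vshuffle_single mulr1 /smap.
under eq_shuffle_coef => v do rewrite T_coef.
case: ifP => _; first by rewrite shuffle_coef0 ?mulr0 // => v; rewrite coef_nil.
under eq_shuffle_coef => v do rewrite coef_vscale.
by rewrite shuffle_coefZ mulrA.
Qed.

Lemma coef_lexp_rexpN a b (l r : nat) (V : vec F) w :
  coef (lexp a (- l%:Z) (rexp b (- r%:Z) V)) w = coef V (nseq l a ++ w ++ nseq r b).
Proof. by rewrite coef_lexpN coef_rexpN catA. Qed.

Lemma coef_smap_subst2 a b (l r : nat) c D n w :
  coef (smap (fun v => lexp a (- l%:Z) (rexp b (- r%:Z) v)) (subst2 c D) n) w =
  if odd n then 0 else c ^+ n./2 * coef (D n./2) (nseq l a ++ w ++ nseq r b).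
Proof.
by rewrite /smap coef_lexp_rexpN /subst2; case: ifP; rewrite ?coef_nil ?coef_vscale.
Qed.
End SeriesCoefficients.

Section DeltaIdentity.
Context {F : fieldType} (q : F).
Hypotheses (q_neq0 : q != 0) (q2_neq1 : q ^+ 2 != 1).

Lemma sum_shuffle_coef_Delta (f : nat -> F) (U : nat -> word) K (k l r : nat) w :
  \sum_(0 <= i < k) f i * shuffle_coef q (U i)
      (fun v => coef (Delta q K (k - 1 - i)) (nseq l lx ++ v ++ nseq r ly)) w =
  dco q K 0 (nseq l lx) * dco q K r%:Z (nseq r ly) *
  \sum_(0 <= i < k - l) f i * shuffle_coef q (U i) (dco_path q K l r (k - l - 1 - i)) w.
Proof.
rewrite (big_cat_nat _ (leq_subr l k)) //= [X in _ + X]big_nat_cond.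
rewrite [X in _ + X]big1 ?addr0; last first.
  move=> i /andP[/andP[le_i lt_i] _]; rewrite shuffle_coef0 ?mulr0 // => v.
  by rewrite coef_Delta_nseq_cat ifF //; apply/negP; lia.
rewrite mulr_sumr big_nat_cond [RHS]big_nat_cond; apply: eq_bigr => i /andP[/andP[_ hi] _].
rewrite [RHS]mulrCA; congr (_ * _); rewrite -shuffle_coefZ; apply: eq_shuffle_coef => v.
rewrite coef_Delta_nseq_cat ifT; last by lia.
by congr (_ * dco_path _ _ _ _ _ _); lia.
Qed.

Lemma alpha_sign (m l N i j : nat) : (j + i.+1 = N + l)%N ->
  (-1) ^+ (N + l) * alpha q m l N i =
  q ^ (2 * l%:Z) * (q ^+ m) ^+ i * (- q^-1) ^+ j * qint q (m%:Z - l%:Z + 1).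
Proof.
move=> ji; have qE : q ^ ((m%:Z + 1) * i%:Z - N%:Z + l%:Z + 1) =
    q ^ (2 * l%:Z) * (q ^+ m) ^+ i * q^-1 ^+ j.
  by rewrite -exprM !exprnP exprz_inv -!expfzDr //; congr (q ^ _); nia.
rewrite /alpha qE [(- q^-1) ^+ _]exprNn -ji exprD.
have sign2 : (-1) ^+ i.+1 * (-1) ^+ i.+1 = 1 :> F by rewrite -expr2 sqrr_sign.
move: (q ^ (2 * l%:Z)) (q ^+ m ^+ i) (q^-1 ^+ j) (qint q _) ((-1) ^+ i.+1) sign2 => A B C K s sign2.
transitivity ((-1) ^+ j * (s * s) * A * B * C * K); first by ring.
by rewrite sign2; ring.
Qed.

Lemma beta_sign (m l N i j : nat) : (j + i.+1 = N + l.+1)%N ->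
  (-1) ^+ (N + l.+1) * beta q m l.+1 N i =
  - (q ^ l%:Z * (q ^+ m) ^+ i * (- q^-1) ^+ j * qint q l.+1%:Z).
Proof.
move=> ji; have qE : q ^ ((m%:Z + 1) * i%:Z - N%:Z) = q ^ l%:Z * (q ^+ m) ^+ i * q^-1 ^+ j.
  by rewrite -exprM !exprnP exprz_inv -!expfzDr //; congr (q ^ _); nia.
rewrite /beta qE [(- q^-1) ^+ _]exprNn -ji exprD exprS.
have sign2 : (-1) ^+ i * (-1) ^+ i = 1 :> F by rewrite -expr2 sqrr_sign.
move: (q ^ l%:Z) (q ^+ m ^+ i) (q^-1 ^+ j) (qint q _) ((-1) ^+ i) sign2 => A B C K s sign2.
transitivity (- ((-1) ^+ j * (s * s) * A * B * C * K)); first by ring.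
by rewrite sign2; ring.
Qed.

Lemma dco_nseq_lx_opp (m l : nat) :
  dco q (- m%:Z - 1) 0 (nseq l lx) * qint q (m%:Z - l%:Z + 1) =
  qint q m.+1%:Z * dco q (- m%:Z) 0 (nseq l lx).
Proof.
have := dco_nseq_lxSr q (- m%:Z - 1) l; rewrite dco_nseq_lxS subrK => dcoS.
rewrite (_ : m%:Z - l%:Z + 1 = - (l%:Z + (- m%:Z - 1))); last by lia.
rewrite qintN mulrN -dcoS (_ : - m%:Z - 1 = - m.+1%:Z); last by lia.
by rewrite qintN mulNr opprK.
Qed.

Lemma W_terms (m l N : nat) (s : nat -> F) :
  (-1) ^+ (N + l) * dco q (- m%:Z - 1) 0 (nseq l lx) * \sum_(0 <= i < N) alpha q m l N i * s i =
  q ^ (2 * l%:Z) * qint q m.+1%:Z * (dco q (- m%:Z) 0 (nseq l lx) *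
    \sum_(0 <= i < N) (q ^+ m) ^+ i * (- q^-1) ^+ (N + l - 1 - i) * s i).
Proof.
rewrite !mulr_sumr; apply: eq_big_nat => i /andP[_ lt_iN].
rewrite [LHS]mulrA [_ * _ * alpha _ _ _ _ _]mulrAC.
rewrite (alpha_sign _ _ _ _ (N + l - 1 - i)); last by lia.
by rewrite -[_ * qint q _ * _]mulrA [qint q _ * _]mulrC dco_nseq_lx_opp; ring.
Qed.

Lemma G_terms (m l N : nat) (s : nat -> F) :
  (-1) ^+ (N + l.+1) * dco q (- m%:Z - 1) 0 (nseq l.+1 lx) *
    \sum_(0 <= i < N.+1) beta q m l.+1 N i * s i =
  q ^ l%:Z * qint q l.+1%:Z * qint q m.+1%:Z * (dco q (- m%:Z) 0 (nseq l lx) *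
    \sum_(0 <= i < N.+1) (q ^+ m) ^+ i * (- q^-1) ^+ (N + l.+1 - 1 - i) * s i).
Proof.
rewrite dco_nseq_lxS subrK (_ : - m%:Z - 1 = - m.+1%:Z); last by lia.
rewrite qintN !mulr_sumr; apply: eq_big_nat => i /andP[_ le_iN].
rewrite [LHS]mulrA [_ * _ * beta _ _ _ _ _]mulrAC.
rewrite (beta_sign _ _ _ _ (N + l.+1 - 1 - i)); last by lia.
by ring.
Qed.

Lemma Delta_coef_identity (m l r k : nat) w :
  (-1) ^+ k * coef (Delta q (- m%:Z - 1) k) (nseq l lx ++ w ++ nseq r.+1 ly) =
  q ^ (2 * l%:Z) * qint q m.+1%:Z *
    \sum_(0 <= j < k) (q ^+ m) ^+ j * (- q^-1) ^+ (k - 1 - j) * shuffle_coef q (wm_word j)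
      (fun v => coef (Delta q (- m%:Z) (k - 1 - j)) (nseq l lx ++ v ++ nseq r ly)) w
  + q ^ (l%:Z - 1) * qint q l%:Z * qint q m.+1%:Z *
    \sum_(0 <= j < k) (q ^+ m) ^+ j * (- q^-1) ^+ (k - 1 - j) * shuffle_coef q (g_word j)
      (fun v => coef (Delta q (- m%:Z) (k - 1 - j)) (nseq l.-1 lx ++ v ++ nseq r ly)) w.
Proof.
rewrite !sum_shuffle_coef_Delta coef_Delta_nseq_cat.
case: leqP => [le_lk|lt_kl]; last by rewrite !big_geq ?mulr0 ?addr0 //; lia.
have [N ->] : exists N, k = (N + l)%N by exists (k - l)%N; rewrite subnK.
rewrite addnK dco_nseq_lyS (dco_nseq_ly_indep q _ (- m%:Z)).
set dY := dco q (- m%:Z) r%:Z _; set dX' := dco q (- m%:Z - 1) 0 _.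
have -> : (-1) ^+ (N + l) * (dX' * (qint q r.+1%:Z * dY) * dco_path q (- m%:Z - 1) l r.+1 N w) =
  dY * ((-1) ^+ (N + l) * dX' * (qint q r.+1%:Z * dco_path q (- m%:Z - 1) l r.+1 N w)) by ring.
rewrite ![_ * dY]mulrC -![dY * _ * _]mulrA ![_ * (dY * _)]mulrCA -mulrDr; congr (_ * _).
rewrite (dco_path_expansion q q_neq0 q2_neq1) (_ : r.+1%:Z - 1 = r%:Z) ?mulrDr; last by lia.
congr (_ + _).
  rewrite W_terms; do 2!congr (_ * _); apply: eq_big_nat => i /andP[_ lt_iN].
  by congr (_ * shuffle_coef _ _ (dco_path _ _ _ _ _) _); lia.
rewrite {}/dX'; case: l le_lk => [|l] _.
  rewrite big1 => [|i _]; last by rewrite /beta qint0 !mulr0 mul0r.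
  by rewrite qint0 !mulr0 !mul0r.
rewrite G_terms (_ : l.+1%:Z - 1 = l%:Z); last by lia.
do 2!congr (_ * _); rewrite (_ : (N + l.+1 - l = N.+1)%N); last by lia.
apply: eq_big_nat => i /andP[_ le_iN].
by congr (_ * shuffle_coef _ _ (dco_path _ _ _ _ _) _); lia.
Qed.

Lemma Delta_identity (m l r : nat) : (1 <= r)%N ->
  series_eq
    (smap (fun v => lexp lx (- l%:Z) (rexp ly (- r%:Z) v))
          (subst2 (-1) (DeltaS q (- m%:Z - 1))))
    (sadd
      (sscale (q ^ (2 * l%:Z) * qint q (m.+1)%:Z)
        (sshuffle q (mult_t2 (subst2 (q ^+ m) (Wm F)))
           (smap (fun v => lexp lx (- l%:Z) (rexp ly (1 - r%:Z) v))
                 (subst2 (- q^-1) (DeltaS q (- m%:Z))))))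
      (sscale (q ^ (l%:Z - 1) * qint q l%:Z * qint q (m.+1)%:Z)
        (sshuffle q (mult_t2 (subst2 (q ^+ m) (G F)))
           (smap (fun v => lexp lx (1 - l%:Z) (rexp ly (1 - r%:Z) v))
                 (subst2 (- q^-1) (DeltaS q (- m%:Z))))))).
Proof.
case: r => [//|r] _ n w; rewrite (_ : 1 - r.+1%:Z = - r%:Z); last by lia.
rewrite coef_smap_subst2 /sadd coef_cat /sscale !coef_vscale.
rewrite (coef_sshuffle_t2 q _ _ _ wm_word _ (fun v => nseq l lx ++ v ++ nseq r ly)) //;
  last by move=> V v; rewrite coef_lexp_rexpN.
case: l => [|l].
  (* For [l = 0] the operator [x^(1-l)] is a concatenation, not a deletion,
     but the term carries the factor [[0]_q = 0]. *)
  rewrite qint0 !mulr0 !mul0r addr0; case: ifP => _; first by rewrite mulr0.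
  by rewrite Delta_coef_identity qint0 !mulr0 !mul0r addr0.
rewrite (_ : 1 - l.+1%:Z = - l%:Z); last by lia.
rewrite (coef_sshuffle_t2 q _ _ _ g_word _ (fun v => nseq l lx ++ v ++ nseq r ly)) //;
  last by move=> V v; rewrite coef_lexp_rexpN.
case: ifP => _; first by rewrite !mulr0 addr0.
exact: Delta_coef_identity.
Qed.
End DeltaIdentity.

Definition swap_word (w : word) : word := map swap_letter w.

Lemma swap_letterK : involutive swap_letter. Proof. by case. Qed.

Lemma swap_wordK : involutive swap_word.
Proof. by apply: mapK; apply: swap_letterK. Qed.

Lemma pairing_swap a b : pairing (swap_letter a) (swap_letter b) = pairing a b.
Proof. by case: a; case: b. Qed.

Lemma pairings_swap b u : pairings (swap_letter b) (swap_word u) = pairings b u.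
Proof. by rewrite /pairings big_map; apply: eq_bigr => c _; rewrite pairing_swap. Qed.

Section Swap.
Context {F : fieldType} (q : F).
Implicit Types (U V : vec F) (A B : series F).

Definition vswap V : vec F := [seq (p.1, swap_word p.2) | p <- V].

Lemma coef_vswap V w : coef (vswap V) w = coef V (swap_word w).
Proof.
rewrite /coef big_map; apply: eq_bigl => p /=.
by rewrite (can2_eq swap_wordK swap_wordK).
Qed.

Lemma vswap_cat U V : vswap (U ++ V) = vswap U ++ vswap V.
Proof. exact: map_cat. Qed.

Lemma vswap_scale c V : vscale c (vswap V) = vswap (vscale c V).
Proof. by rewrite /vscale /vswap -!map_comp. Qed.

Lemma vswap_lcons a V : lcons (swap_letter a) (vswap V) = vswap (lcons a V).
Proof. by rewrite /lcons /vswap -!map_comp. Qed.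

Lemma vswap_ldel1 a V : ldel1 (swap_letter a) (vswap V) = vswap (ldel1 a V).
Proof.
elim: V => [|[c s] V IH] //; rewrite /ldel1 /= in IH *.
have -> : (ohead (swap_word s) == Some (swap_letter a)) = (ohead s == Some a).
  by case: s {IH} => [|b s] //=; case: a; case: b.
by case: ifP => _ /=; rewrite IH // /swap_word behead_map.
Qed.

Lemma vswap_rdel1 a V : rdel1 (swap_letter a) (vswap V) = vswap (rdel1 a V).
Proof.
elim: V => [|[c s] V IH] //; rewrite /rdel1 /= in IH *.
have -> : (ohead (rev (swap_word s)) == Some (swap_letter a)) = (ohead (rev s) == Some a).
  by rewrite /swap_word -map_rev; case: (rev s) {IH} => [|b t] //=; case: a; case: b.
by case: ifP => _ /=; rewrite IH // /swap_word -map_rev behead_map map_rev.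
Qed.

Lemma vswap_lexp a e V : lexp (swap_letter a) e (vswap V) = vswap (lexp a e V).
Proof.
case: e => n; rewrite /lexp.
  by rewrite /vswap -!map_comp; apply: eq_map => -[c s]; rewrite /= /swap_word map_cat map_nseq.
by elim: n.+1 => //= k ->; rewrite vswap_ldel1.
Qed.

Lemma vswap_rexp a e V : rexp (swap_letter a) e (vswap V) = vswap (rexp a e V).
Proof.
case: e => n; rewrite /rexp.
  by rewrite /vswap -!map_comp; apply: eq_map => -[c s]; rewrite /= /swap_word map_cat map_nseq.
by elim: n.+1 => //= k ->; rewrite vswap_rdel1.
Qed.

Lemma wshuffle_cons a u b v : wshuffle q (a :: u) (b :: v) =
  lcons a (wshuffle q u (b :: v)) ++
  vscale (q ^ pairings b (a :: u)) (lcons b (wshuffle q (a :: u) v)).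
Proof. by []. Qed.

Lemma wshuffle_swap u v : wshuffle q (swap_word u) (swap_word v) = vswap (wshuffle q u v).
Proof.
elim: u v => [|a u IHu] v //; elim: v => [|b v IHv] //.
rewrite -[swap_word (b :: v)]/(swap_letter b :: swap_word v).
rewrite -[swap_word (a :: u)]/(swap_letter a :: swap_word u) wshuffle_cons.
rewrite -[swap_letter a :: _]/(swap_word (a :: u)) -[swap_letter b :: _]/(swap_word (b :: v)).
by rewrite pairings_swap IHu IHv !vswap_lcons vswap_scale -vswap_cat.
Qed.

Lemma vshuffle_swap U V : vshuffle q (vswap U) (vswap V) = vswap (vshuffle q U V).
Proof.
rewrite /vshuffle; elim: U => [|a U IH] //=.
rewrite !flatten_cat vswap_cat IH; congr (_ ++ _).
elim: V {IH} => [|b V IHV] //=.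
by rewrite vswap_cat IHV wshuffle_swap vswap_scale.
Qed.

Definition swapped A' A : Prop := forall n, A' n = vswap (A n).

Lemma series_eq_swapped A' A B' B :
  swapped A' A -> swapped B' B -> series_eq A B -> series_eq A' B'.
Proof. by move=> swA swB eqAB n w; rewrite swA swB !coef_vswap. Qed.

Lemma swapped_sadd A' A B' B : swapped A' A -> swapped B' B -> swapped (sadd A' B') (sadd A B).
Proof. by move=> swA swB n; rewrite /sadd swA swB vswap_cat. Qed.

Lemma swapped_sscale c A' A : swapped A' A -> swapped (sscale c A') (sscale c A).
Proof. by move=> swA n; rewrite /sscale swA vswap_scale. Qed.

Lemma swapped_smap_lexp_rexp a b e1 e2 A' A : swapped A' A ->
  swapped (smap (fun v => lexp (swap_letter a) e1 (rexp (swap_letter b) e2 v)) A')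
          (smap (fun v => lexp a e1 (rexp b e2 v)) A).
Proof. by move=> swA n; rewrite /smap swA vswap_rexp vswap_lexp. Qed.

Lemma swapped_subst2 c A' A : swapped A' A -> swapped (subst2 c A') (subst2 c A).
Proof. by move=> swA n; rewrite /subst2; case: ifP; rewrite // swA vswap_scale. Qed.

Lemma swapped_mult_t2 A' A : swapped A' A -> swapped (mult_t2 A') (mult_t2 A).
Proof. by move=> swA n; rewrite /mult_t2; case: ifP; rewrite // swA. Qed.

Lemma swapped_sshuffle A' A B' B :
  swapped A' A -> swapped B' B -> swapped (sshuffle q A' B') (sshuffle q A B).
Proof.
move=> swA swB n; rewrite /sshuffle /vswap map_flatten -map_comp; congr flatten.
by apply: eq_map => i /=; rewrite swA swB vshuffle_swap.
Qed.

Lemma swapped_Wp : swapped (Wp F) (Wm F).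
Proof. by move=> n; rewrite /Wp /Wm /vswap /= /swap_word /= map_flatten map_nseq. Qed.

Lemma swapped_Gt : swapped (Gt F) (G F).
Proof. by move=> n; rewrite /Gt /G /vswap /= /swap_word map_flatten map_nseq. Qed.

Lemma swapped_Deltat k : swapped (DeltatS q k) (DeltaS q k).
Proof. by []. Qed.
End Swap.

Theorem lemma6p7 (F : fieldType) (q : F) (m l r : nat) :
  [pchar F] =i pred0 -> q != 0 -> (forall n : nat, (0 < n)%N -> q ^+ n != 1) ->
  (l <= m)%N -> (1 <= r)%N -> (r <= m)%N ->
  series_eq
    (smap (fun v => lexp lx (- l%:Z) (rexp ly (- r%:Z) v))
          (subst2 (-1) (DeltaS q (- m%:Z - 1))))
    (sadd
      (sscale (q ^ (2 * l%:Z) * qint q (m.+1)%:Z)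
        (sshuffle q (mult_t2 (subst2 (q ^+ m) (Wm F)))
           (smap (fun v => lexp lx (- l%:Z) (rexp ly (1 - r%:Z) v))
                 (subst2 (- q^-1) (DeltaS q (- m%:Z))))))
      (sscale (q ^ (l%:Z - 1) * qint q l%:Z * qint q (m.+1)%:Z)
        (sshuffle q (mult_t2 (subst2 (q ^+ m) (G F)))
           (smap (fun v => lexp lx (1 - l%:Z) (rexp ly (1 - r%:Z) v))
                 (subst2 (- q^-1) (DeltaS q (- m%:Z)))))))
  /\
  series_eq
    (smap (fun v => lexp ly (- l%:Z) (rexp lx (- r%:Z) v))
          (subst2 (-1) (DeltatS q (- m%:Z - 1))))
    (sadd
      (sscale (q ^ (2 * l%:Z) * qint q (m.+1)%:Z)
        (sshuffle q (mult_t2 (subst2 (q ^+ m) (Wp F)))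
           (smap (fun v => lexp ly (- l%:Z) (rexp lx (1 - r%:Z) v))
                 (subst2 (- q^-1) (DeltatS q (- m%:Z))))))
      (sscale (q ^ (l%:Z - 1) * qint q l%:Z * qint q (m.+1)%:Z)
        (sshuffle q (mult_t2 (subst2 (q ^+ m) (Gt F)))
           (smap (fun v => lexp ly (1 - l%:Z) (rexp lx (1 - r%:Z) v))
                 (subst2 (- q^-1) (DeltatS q (- m%:Z))))))).
Proof.
move=> _ q_neq0 q_not_root _ r_gt0 _.
have q2_neq1 : q ^+ 2 != 1 by exact: q_not_root.
have Delta_id := Delta_identity q q_neq0 q2_neq1 m l r r_gt0.
split=> //; apply: series_eq_swapped Delta_id.
  apply: (swapped_smap_lexp_rexp lx ly); apply: swapped_subst2; exact: swapped_Deltat.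
apply: swapped_sadd; apply: swapped_sscale; apply: swapped_sshuffle.
- apply: swapped_mult_t2; apply: swapped_subst2; exact: swapped_Wp.
- apply: (swapped_smap_lexp_rexp lx ly); apply: swapped_subst2; exact: swapped_Deltat.
- apply: swapped_mult_t2; apply: swapped_subst2; exact: swapped_Gt.
- apply: (swapped_smap_lexp_rexp lx ly); apply: swapped_subst2; exact: swapped_Deltat.
Qed.
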